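(* Let $G$ be a finite group and $U,V\leq G\times G$ with $\Delta(G)\leq U$ and $\Delta(G)\leq V$. Suppose that $U$ and $V$ are extensible. Then $U\ast V$ is extensible if and only if $k_i(U\ast V)\cap G'=(k_i(U)\cap G')(k_i(V)\cap G')$ for $i\in\{1,2\}$.
   Context: $\Delta(G)=\{(g,g):g\in G\}$; $G'$ is the commutator subgroup. For $W\leq G\times G$: $p_1(W)=\{g:\exists h,(g,h)\in W\}$, $p_2(W)=\{h:\exists g,(g,h)\in W\}$, $k_1(W)=\{g:(g,1)\in W\}$, $k_2(W)=\{h:(1,h)\in W\}$. The $\ast$-product is $U\ast V=\{(u,v)\in p_1(U)\times p_2(V):\exists x\in p_2(U)\cap p_1(V),\ (u,x)\in U,\ (x,v)\in V\}$. An abelian group $A$ satisfies the Hypothesis (with set of primes $\pi$) if there is a unique set of primes $\pi$ such that for every $n\in\mathbb{N}$ the $n$-torsion part of $A$ is cyclic of order $n_\pi$ (the $\pi$-part of $n$). A subgroup $W\leq G\times G$ with $p_1(W)=p_2(W)=G$ is $A$-extensible if every homomorphism $W\to A$ extends to a homomorphism $G\times G\to A$, and extensible if it is $A$-extensible for every abelian group $A$ satisfying the Hypothesis. *)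

From HB Require Import structures.
From mathcomp Require Import all_boot all_order all_algebra all_fingroup all_solvable.
Set Implicit Arguments. Unset Strict Implicit. Unset Printing Implicit Defensive.
Import GRing.Theory.

Local Open Scope group_scope.

Section Defs.
Variable gT : finGroupType.
Implicit Types (G : {set gT}) (W U V : {set gT * gT}).

Definition diagG G : {set gT * gT} := [set (g, g) | g in G].

Definition p1 W : {set gT} := [set x.1 | x in W].
Definition p2 W : {set gT} := [set x.2 | x in W].
Definition k1 W : {set gT} := [set g | (g, 1) \in W].
Definition k2 W : {set gT} := [set h | (1, h) \in W].

Definition starp U V : {set gT * gT} :=
  [set uv in setX (p1 U) (p2 V) |
     [exists x in p2 U :&: p1 V, ((uv.1, x) \in U) && ((x, uv.2) \in V)]].

End Defs.

Definition torsion_cyclic_of_order (A : zmodType) (n m : nat) : Prop :=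
  exists g : A,
    (g *+ n = 0)%R /\
    (forall a : A, (a *+ n = 0)%R -> exists k : nat, a = (g *+ k)%R) /\
    (g *+ m = 0)%R /\ (forall k : nat, (0 < k < m)%N -> (g *+ k != 0)%R).

Definition hyp_pi (A : zmodType) (pi : nat_pred) : Prop :=
  (forall p, p \in pi -> prime p) /\
  (forall n : nat, (0 < n)%N -> torsion_cyclic_of_order A n (n`_pi)%N).

Definition Hypothesis_ab (A : zmodType) : Prop :=
  exists pi : nat_pred, hyp_pi A pi /\
    (forall pi' : nat_pred, hyp_pi A pi' -> pi' =i pi).

Definition is_hom_on (aT : finGroupType) (A : zmodType) (H : {set aT})
    (f : aT -> A) : Prop :=
  forall x y, x \in H -> y \in H -> f (x * y) = (f x + f y)%R.

Definition A_extensible (gT : finGroupType) (A : zmodType) (G : {set gT})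
    (W : {set gT * gT}) : Prop :=
  forall f : gT * gT -> A, is_hom_on W f ->
    exists F : gT * gT -> A, is_hom_on (setX G G) F /\
      (forall w, w \in W -> F w = f w).

Definition extensible (gT : finGroupType) (G : {set gT}) (W : {set gT * gT}) : Prop :=
  p1 W = G /\ p2 W = G /\
  forall A : zmodType, Hypothesis_ab A -> A_extensible A G W.

From HB Require Import structures.
From mathcomp Require Import all_boot all_order all_algebra all_fingroup all_solvable.
From mathcomp Require Import all_field all_character.
Set Implicit Arguments. Unset Strict Implicit. Unset Printing Implicit Defensive.
Import GRing.Theory.

(* A subgroup U with Delta(G) <= U <= G x G is the set of pairs (x, y) of G
   with x y^-1 in the normal subgroup N = k1 U = k2 U, and U * V corresponds
   to N M.  Such a U is extensible exactly when N :&: G' = [N, G].  If so, a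
   homomorphism f on U is determined by n |-> f (n, 1), which kills [N, G],
   and by g |-> f (g, g); the former extends from N to G because a group
   satisfying the Hypothesis is divisible on its torsion elements, which lets
   one extend over G'N and then one cyclic step at a time.  Conversely, a
   linear character of N / [N, G] that is nontrivial at some n in N :&: G'
   gives a homomorphism into the nonzero algebraic numbers with no extension,
   since every homomorphism on G kills G'.  The criterion for N M becomes the
   product condition because [N M, G] = [N, G] [M, G]. *)

Section NonzeroAlgC.
Local Open Scope ring_scope.

(* The multiplicative group of nonzero algebraic numbers, written additively. *)
Definition algCx := {x : algC | x != 0}.
HB.instance Definition _ := Choice.on algCx.

Definition algCx_one : algCx := exist _ 1 (oner_neq0 _).
Definition algCx_mul (x y : algCx) : algCx :=
  exist _ (val x * val y) (mulf_neq0 (valP x) (valP y)).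
Definition algCx_inv (x : algCx) : algCx := exist _ (val x)^-1 (invr_neq0 (valP x)).

Fact algCx_mulA : associative algCx_mul.
Proof. by move=> x y z; apply: val_inj; rewrite /= mulrA. Qed.
Fact algCx_mulC : commutative algCx_mul.
Proof. by move=> x y; apply: val_inj; rewrite /= mulrC. Qed.
Fact algCx_mul1 : left_id algCx_one algCx_mul.
Proof. by move=> x; apply: val_inj; rewrite /= mul1r. Qed.
Fact algCx_mulV : left_inverse algCx_one algCx_inv algCx_mul.
Proof. by move=> x; apply: val_inj; rewrite /= mulVf ?(valP x). Qed.
HB.instance Definition _ :=
  GRing.isZmodule.Build algCx algCx_mulA algCx_mulC algCx_mul1 algCx_mulV.

Lemma algCx_val0 : val (0 : algCx) = 1. Proof. by []. Qed.
Lemma algCx_valD (x y : algCx) : val (x + y) = val x * val y. Proof. by []. Qed.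
Lemma algCx_valMn (x : algCx) n : val (x *+ n) = val x ^+ n.
Proof. by elim: n => // n IHn; rewrite mulrS exprS algCx_valD IHn. Qed.
Lemma algCx_eq0 (x : algCx) : (x == 0) = (val x == 1).
Proof. by rewrite -val_eqE. Qed.

Definition algCx_of (z : algC) : algCx := insubd algCx_one z.
Lemma algCx_ofK z : z != 0 -> val (algCx_of z) = z.
Proof. by move=> nz_z; rewrite /algCx_of insubdK. Qed.

Lemma algCx_torsion n : (0 < n)%N ->
  exists g : algCx, (forall k, (g *+ k == 0) = (n %| k)%N) /\
    (forall x : algCx, x *+ n = 0 -> exists k, x = g *+ k).
Proof.
move=> n_gt0; have [z prim_z] := C_prim_root_exists n_gt0.
have nz_z : z != 0 by rewrite (prim_root_eq0 prim_z) -lt0n.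
exists (algCx_of z); split=> [k | x /(congr1 val)].
  by rewrite algCx_eq0 algCx_valMn algCx_ofK // (prim_order_dvd prim_z).
rewrite algCx_valMn algCx_val0 => /(prim_rootP prim_z)[i def_x].
by exists i; apply: val_inj; rewrite algCx_valMn algCx_ofK.
Qed.

Lemma hyp_pi_algCx : hyp_pi algCx [pred p | prime p].
Proof.
split=> // n n_gt0; rewrite part_pnat_id; last by apply/pnatP.
have [g [ord_g tor_g]] := algCx_torsion n_gt0; exists g.
do !split=> //; try by apply/eqP; rewrite ord_g.
by move=> k /andP[k_gt0 lt_k_n]; rewrite ord_g gtnNdvd.
Qed.

Lemma Hypothesis_algCx : Hypothesis_ab algCx.
Proof.
exists [pred p | prime p]; split=> [|pi [pi_pr tor_pi] p]; first exact: hyp_pi_algCx.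
rewrite inE; apply/idP/idP=> [/pi_pr // | p_pr]; apply: contraTT isT => pi'p.
have [g [_ [tor_g [g1 _]]]] := tor_pi p (prime_gt0 p_pr).
rewrite part_p'nat ?pnatE // mulr1n in g1.
have [x [ord_x _]] := algCx_torsion (prime_gt0 p_pr).
have [|k def_x] := tor_g x; first by apply/eqP; rewrite ord_x.
have := ord_x 1%N; rewrite def_x g1 !mul0rn eqxx dvdn1 => /esym/eqP p1.
by rewrite p1 in p_pr.
Qed.

End NonzeroAlgC.

Definition torsion_divisible (A : zmodType) : Prop :=
  forall (y : A) (e k : nat), (0 < e)%N -> (0 < k)%N -> (y *+ e = 0)%R ->
    exists x : A, (x *+ k = y)%R.

Section TorsionDivisible.
Local Open Scope ring_scope.
Variable A : zmodType.
Implicit Types g y : A.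

Lemma mulrn_modn g m t : g *+ m = 0 -> g *+ (t %% m) = g *+ t.
Proof. by move=> gm; rewrite {2}(divn_eq t m) mulrnDr mulnC mulrnA gm mul0rn add0r. Qed.

Lemma mulrn_eq0_order g m : (0 < m)%N -> g *+ m = 0 ->
    (forall t, (0 < t < m)%N -> g *+ t != 0) ->
  forall t, (g *+ t == 0) = (m %| t)%N.
Proof.
move=> m_gt0 gm min_m t; apply/eqP/idP=> [gt0 | /dvdnP[q ->]].
  apply: contraTT isT => ndvd_m_t; move: (min_m (t %% m)%N).
  by rewrite lt0n ndvd_m_t ltn_mod m_gt0 mulrn_modn // gt0 eqxx; apply.
by rewrite mulnC mulrnA gm mul0rn.
Qed.

Lemma mulrn_coprime_surj g m q : (0 < m)%N -> g *+ m = 0 -> coprime q m ->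
  exists b, b *+ q = g.
Proof.
move=> m_gt0 gm co_q_m; exists (g *+ q ^ (totient m).-1).
rewrite -mulrnA -expnSr prednK ?totient_gt0 // -(mulrn_modn _ gm).
by rewrite (Euler_exp_totient co_q_m) mulrn_modn.
Qed.

Lemma hyp_pi_torsion_divisible pi : hyp_pi A pi -> torsion_divisible A.
Proof.
(* y lies in the (k * e`_pi)-torsion, cyclic of order m = k`_pi * e`_pi, where
   it is a multiple of k`_pi, and multiplication by k`_pi^' is invertible mod m. *)
move=> [_ tor] y e k e_gt0 k_gt0 ye; set e' := (e`_pi)%N.
have e'_gt0 : (0 < e')%N := part_gt0 pi e.
have ye' : y *+ e' = 0.
  have [g [_ [tor_g [ge' _]]]] := tor e e_gt0; have [j ->] := tor_g y ye.
  by rewrite -mulrnA mulnC mulrnA ge' mul0rn.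
have ke'_gt0 : (0 < k * e')%N by rewrite muln_gt0 k_gt0.
have [g [_ [tor_g [gm min_m]]]] := tor _ ke'_gt0.
rewrite partnM // (part_pnat_id (part_pnat pi e)) in gm min_m.
set m := (k`_pi * e')%N in gm min_m.
have m_gt0 : (0 < m)%N by rewrite muln_gt0 part_gt0.
have ord_g := mulrn_eq0_order m_gt0 gm min_m.
have [j def_y] : exists j, y = g *+ j.
  by apply: tor_g; rewrite mulnC mulrnA ye' mul0rn.
have /dvdnP[j' def_j] : (k`_pi %| j)%N.
  by rewrite -(dvdn_pmul2r e'_gt0) -ord_g mulrnA -def_y ye'.
have co_k'_m : coprime k`_pi^' m.
  by rewrite coprime_sym (pnat_coprime _ (part_pnat _ _)) // pnatM !part_pnat.
have [b gb] := mulrn_coprime_surj m_gt0 gm co_k'_m.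
exists (b *+ j'); rewrite def_y def_j -gb -!mulrnA -{1}(partnC pi k_gt0).
by rewrite mulnA mulnC.
Qed.

End TorsionDivisible.

Local Open Scope group_scope.

Lemma mulg_invMJ (gT : finGroupType) (x y h k : gT) :
  x * y * (h * k)^-1 = x * h^-1 * (y * k^-1) ^ h^-1.
Proof. by rewrite conjgE invgK invMg !mulgA mulgKV. Qed.

Section HomOn.
Variables (gT : finGroupType) (A : zmodType) (H : {group gT}) (f : gT -> A).
Hypothesis hf : is_hom_on H f.

Lemma hom_on1 : f 1 = 0%R.
Proof. by apply: (@addrI _ (f 1)); rewrite -hf ?mulg1 ?addr0. Qed.

Lemma hom_onV x : x \in H -> f x^-1 = (- f x)%R.
Proof.
by move=> Hx; apply/eqP; rewrite -addr_eq0 addrC -hf ?groupV ?mulgV ?hom_on1.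
Qed.

Lemma hom_onX x n : x \in H -> f (x ^+ n) = (f x *+ n)%R.
Proof.
move=> Hx; elim: n => [|n IHn]; first by rewrite hom_on1.
by rewrite expgS hf ?groupX // IHn mulrS.
Qed.

Lemma hom_onJ x y : x \in H -> y \in H -> f (x ^ y) = f x.
Proof.
by move=> Hx Hy; rewrite conjgE !hf ?groupM ?groupV // hom_onV // addrCA addNr addr0.
Qed.

Lemma hom_onR x y : x \in H -> y \in H -> f [~ x, y] = 0%R.
Proof.
by move=> Hx Hy; rewrite commgEl hf ?groupV ?groupJ // hom_onJ // hom_onV ?addNr.
Qed.

Lemma hom_on_gen_eq0 (S : {set gT}) : S \subset H ->
  {in S, forall x, f x = 0%R} -> {in <<S>>, forall x, f x = 0%R}.
Proof.
move=> sSH fS0.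
have kerf : group_set [set x in H | f x == 0%R].
  apply/group_setP; split=> [|x y]; first by rewrite inE group1 hom_on1 eqxx.
  rewrite !inE => /andP[Hx /eqP fx0] /andP[Hy /eqP fy0].
  by rewrite groupM // hf // fx0 fy0 addr0 /=.
have /subsetP sSker : <<S>> \subset Group kerf.
  by rewrite gen_subG; apply/subsetP => x Sx; rewrite inE (subsetP sSH) ?fS0 /=.
by move=> x /sSker; rewrite inE => /andP[_ /eqP].
Qed.

End HomOn.

Lemma hom_on_der1_eq0 (gT : finGroupType) (A : zmodType) (G : {group gT})
    (f : gT -> A) :
  is_hom_on G f -> {in G^`(1), forall x, f x = 0%R}.
Proof.
move=> hf; apply: (hom_on_gen_eq0 hf).
  by apply/subsetP => _ /imset2P[x y Gx Gy ->]; rewrite groupR.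
by move=> _ /imset2P[x y Gx Gy ->]; rewrite (hom_onR hf).
Qed.

Section ExtendAlongCycle.
Variables (gT : finGroupType) (A : zmodType) (H : {group gT}) (c : gT).
Variables (f : gT -> A) (a : A).
Hypotheses (nHc : c \in 'N(H)) (hf : is_hom_on H f).
Hypothesis fJ : {in H & <[c]>, forall h y, f (h ^ y) = f h}.
Hypothesis fc : f (c ^+ #[coset H c]) = (a *+ #[coset H c])%R.

Lemma mem_cycle_coset t : (c ^+ t \in H) = (#[coset H c] %| t)%N.
Proof.
rewrite order_dvdn -morphX //.
by apply/idP/eqP=> [/coset_id // | /(coset_idr (groupX t nHc))].
Qed.

Lemma hom_on_cycleX t : c ^+ t \in H -> f (c ^+ t) = (a *+ t)%R.
Proof.
have Hck : c ^+ #[coset H c] \in H by rewrite mem_cycle_coset.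
by rewrite mem_cycle_coset => /dvdnP[q ->]; rewrite mulnC expgM (hom_onX hf) // fc mulrnA.
Qed.

Lemma cycle_shift x i j : x * c ^- i \in H -> x * c ^- j \in H ->
  (f (x * c ^- i) + a *+ i = f (x * c ^- j) + a *+ j)%R.
Proof.
wlog le_ij : i j / (i <= j)%N => [wlog_ij|].
  by case: (leqP i j) => [|/ltnW] le Hi Hj; [|symmetry]; apply: wlog_ij.
move=> Hxi Hxj; have def_cj : c ^+ j = c ^+ (j - i) * c ^+ i by rewrite -expgD subnK.
have def_xi : x * c ^- i = x * c ^- j * c ^+ (j - i).
  by rewrite def_cj invMg !mulgA mulgKV.
have Hcji : c ^+ (j - i) \in H.
  by rewrite -[c ^+ _](mulKg (x * c ^- j)) -def_xi groupM ?groupV.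
by rewrite def_xi hf // hom_on_cycleX // -addrA -mulrnDr subnK.
Qed.

Definition cycle_index x : nat :=
  if [pick i : 'I_#[c] | x * c ^- i \in H] is Some i then i else 0.

(* On [H <*> <[c]>] this sends [h * c ^+ i] to [f h + a *+ i]. *)
Definition cycle_ext x : A := (f (x * c ^- cycle_index x) + a *+ cycle_index x)%R.

Lemma cycle_extE x i : x * c ^- i \in H -> cycle_ext x = (f (x * c ^- i) + a *+ i)%R.
Proof.
move=> Hxi; apply: cycle_shift => //; rewrite /cycle_index.
case: pickP => // /(_ (Ordinal (ltn_pmod i (order_gt0 c)))) /=.
by rewrite expg_mod_order Hxi.
Qed.

Lemma mem_joing_cycle x : x \in H <*> <[c]> -> exists i, x * c ^- i \in H.
Proof.
rewrite norm_joinEr ?cycle_subG // => /mulsgP[h _ Hh /cycleP[i ->] ->].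
by exists i; rewrite mulgK.
Qed.

Lemma hom_on_cycle_ext : is_hom_on (H <*> <[c]>) cycle_ext.
Proof.
move=> x z /mem_joing_cycle[i Hxi] /mem_joing_cycle[j Hzj].
have def_xz : x * z * c ^- (i + j) = x * c ^- i * (z * c ^- j) ^ c ^- i.
  by rewrite expgD mulg_invMJ.
have Hzj' : (z * c ^- j) ^ c ^- i \in H by rewrite memJ_norm ?groupV ?groupX.
rewrite (cycle_extE (i := i + j)); last by rewrite def_xz groupM.
rewrite def_xz hf // fJ ?groupV ?mem_cycle //.
by rewrite (cycle_extE Hxi) (cycle_extE Hzj) mulrnDr addrACA.
Qed.

Lemma cycle_ext_id : {in H, cycle_ext =1 f}.
Proof.
by move=> x Hx; rewrite (cycle_extE (i := 0)) expg0 invg1 mulg1 ?mulr0n ?addr0.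
Qed.

End ExtendAlongCycle.

Section ExtendByKernel.
Variables (gT : finGroupType) (A : zmodType) (K H : {group gT}) (f : gT -> A).
Hypotheses (nKH : H \subset 'N(K)) (hf : is_hom_on H f).
Hypothesis fK0 : {in H :&: K, forall x, f x = 0%R}.

(* On [K <*> H] this sends [k * h] to [f h]. *)
Definition kernel_ext x : A := f (odflt 1 [pick h in H | x * h^-1 \in K]).

Lemma kernel_extE x h : h \in H -> x * h^-1 \in K -> kernel_ext x = f h.
Proof.
move=> Hh Kxh; rewrite /kernel_ext; case: pickP => /= [h' /andP[Hh' Kxh'] | /(_ h)].
  apply/subr0_eq; rewrite -(hom_onV hf) // -hf ?groupV // fK0 // inE groupM ?groupV //=.
  have -> : h' * h^-1 = (x * h'^-1)^-1 * (x * h^-1) by rewrite invMg invgK mulgA mulgKV.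
  by rewrite groupM ?groupV.
by rewrite Hh Kxh.
Qed.

Lemma hom_on_kernel_ext : is_hom_on (K <*> H) kernel_ext.
Proof.
have memKH x : x \in K <*> H -> exists2 h, h \in H & x * h^-1 \in K.
  by rewrite norm_joinEr // => /mulsgP[k h Kk Hh ->]; exists h; rewrite ?mulgK.
move=> x y /memKH[h Hh Kxh] /memKH[h' Hh' Kyh'].
have Kxy : x * y * (h * h')^-1 \in K.
  by rewrite mulg_invMJ groupM // memJ_norm // (subsetP nKH) ?groupV.
by rewrite (kernel_extE (groupM Hh Hh') Kxy) hf // (kernel_extE Hh Kxh) (kernel_extE Hh' Kyh').
Qed.

Lemma kernel_ext_id : {in H, kernel_ext =1 f}.
Proof. by move=> x Hx; rewrite (kernel_extE Hx) ?mulgV. Qed.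

Lemma kernel_ext_eq0 : {in K, forall x, kernel_ext x = 0%R}.
Proof. by move=> x Kx; rewrite (kernel_extE (group1 H)) ?invg1 ?mulg1 ?(hom_on1 hf). Qed.

End ExtendByKernel.

Section Extension.
Variables (gT : finGroupType) (A : zmodType) (divA : torsion_divisible A).
Variable G : {group gT}.

Lemma hom_on_ext_cycle (H : {group gT}) (f : gT -> A) c :
    H \subset G -> G^`(1) \subset H -> is_hom_on H f ->
    {in G^`(1), forall x, f x = 0%R} -> c \in G ->
  exists2 f1, is_hom_on (H <*> <[c]>) f1 & {in H, f1 =1 f}.
Proof.
move=> sHG sG'H hf fG'0 Gc; have nHc := subsetP (sub_der1_norm sG'H sHG) c Gc.
have fJ : {in H & <[c]>, forall h y, f (h ^ y) = f h}.
  have sCG : <[c]> \subset G by rewrite cycle_subG.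
  move=> h y Hh /(subsetP sCG) Gy.
  have G'hy : [~ h, y] \in G^`(1) by rewrite derg1 mem_commg ?(subsetP sHG h Hh).
  by rewrite conjg_mulR (hf _ _ Hh (subsetP sG'H _ G'hy)) (fG'0 _ G'hy) addr0.
set k := #[coset H c]; have Hck : c ^+ k \in H by rewrite mem_cycle_coset.
have [|a /esym fc] := divA (cardG_gt0 H) (order_gt0 (coset H c)) (y := f (c ^+ k)).
  by rewrite -(hom_onX hf) // expg_cardG // (hom_on1 hf).
by exists (cycle_ext H c f a); [apply: (hom_on_cycle_ext nHc hf fJ) | apply: (cycle_ext_id nHc hf)].
Qed.

Lemma hom_on_ext_der1 (H : {group gT}) (f : gT -> A) :
    H \subset G -> G^`(1) \subset H -> is_hom_on H f ->
    {in G^`(1), forall x, f x = 0%R} ->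
  exists2 F, is_hom_on G F & {in H, F =1 f}.
Proof.
have [n] := ubnP (#|G| - #|H|); elim: n => // n IHn in H f *.
rewrite ltnS => le_n sHG sG'H hf fG'0.
have [sGH | /subsetPn[c Gc notHc]] := boolP (G \subset H).
  by exists f; rewrite // (_ : G :=: H) //; apply/eqP; rewrite eqEsubset sGH.
have [f1 hf1 f1H] := hom_on_ext_cycle sHG sG'H hf fG'0 Gc.
have sHH1 : H \subset H <*> <[c]> := joing_subl H <[c]>.
have sH1G : H <*> <[c]> \subset G by rewrite join_subG sHG cycle_subG.
have ltHH1 : #|H| < #|H <*> <[c]>|.
  rewrite proper_card // properEneq sHH1 andbT; apply: contraNneq notHc => ->.
  by rewrite mem_gen // inE cycle_id orbT.
have lt_n : #|G| - #|H <*> <[c]>| < n.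
  exact: leq_trans (ltn_sub2l (leq_trans ltHH1 (subset_leq_card sH1G)) ltHH1) le_n.
have f1G'0 : {in G^`(1), forall x, f1 x = 0%R}.
  by move=> x G'x; rewrite f1H ?(subsetP sG'H x G'x) //; apply: fG'0.
have [F hF FH1] := IHn _ f1 lt_n sH1G (subset_trans sG'H sHH1) hf1 f1G'0.
by exists F => // x Hx; rewrite FH1 ?f1H ?(subsetP sHH1).
Qed.

Lemma hom_on_ext (H : {group gT}) (f : gT -> A) :
    H \subset G -> is_hom_on H f -> {in H :&: G^`(1), forall x, f x = 0%R} ->
  exists2 F, is_hom_on G F & {in H, F =1 f}.
Proof.
move=> sHG hf fHG'0; have nG'H := subset_trans sHG (der_norm 1 G).
have sG'HG : G^`(1) <*> H \subset G by rewrite join_subG der_sub sHG.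
have [F hF FG'H] := hom_on_ext_der1 sG'HG (joing_subl _ _)
  (hom_on_kernel_ext nG'H hf fHG'0) (kernel_ext_eq0 hf fHG'0).
by exists F => // x Hx; rewrite FG'H ?(kernel_ext_id hf fHG'0) ?(subsetP (joing_subr _ _)).
Qed.

End Extension.

Lemma abelian_irr_separates (gT : finGroupType) (Q : {group gT}) q :
  abelian Q -> q \in Q -> q != 1 -> exists i : Iirr Q, ('chi_i q != 1)%R.
Proof.
move=> cQQ Qq ntq.
have [i chi_q | chi_q1] := pickP (fun i : Iirr Q => ('chi_i q != 1)%R); first by exists i.
suff : q \in \bigcap_i cfker ('chi[Q]_i)%R by rewrite TI_cfker_irr inE (negPf ntq).
apply/bigcapP => i _; rewrite cfkerEirr inE lin_char1 ?(char_abelianP _ cQQ) //.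
by rewrite -(negbK (_ == _)) chi_q1.
Qed.

Lemma hom_on_algCx_separates (gT : finGroupType) (N K : {group gT}) n :
    K <| N -> abelian (N / K) -> n \in N -> n \notin K ->
  exists psi : gT -> algCx,
    [/\ is_hom_on N psi, {in K, forall k, psi k = 0%R} & psi n != 0%R].
Proof.
move=> /andP[sKN nKN] cQQ Nn notKn.
have ntn : coset K n != 1 by apply: contraNneq notKn; apply: coset_idr (subsetP nKN n Nn).
have [i chi_n] := abelian_irr_separates cQQ (mem_quotient K Nn) ntn.
have lin_chi : ('chi[N / K]_i)%R \is a linear_char := char_abelianP _ cQQ i.
pose psi m := algCx_of (('chi_i)%R (coset K m)).
have psiE m : m \in N -> val (psi m) = ('chi_i)%R (coset K m).
  by move=> Nm; rewrite algCx_ofK // (lin_char_neq0 lin_chi) ?mem_quotient.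
exists psi; split=> [x y Nx Ny | k Kk |].
- apply: val_inj; rewrite algCx_valD !psiE ?groupM //.
  by rewrite morphM ?(subsetP nKN) // (lin_charM lin_chi) ?mem_quotient.
- by apply: val_inj; rewrite psiE ?(subsetP sKN) // coset_id // lin_char1.
by rewrite algCx_eq0 psiE.
Qed.

Section PairHoms.
Variables (gT : finGroupType) (A : zmodType) (W : {set gT * gT}) (f : gT * gT -> A).
Hypothesis hf : is_hom_on W f.

Lemma hom_on_inl (H : {set gT}) :
  {in H, forall x, (x, 1) \in W} -> is_hom_on H (fun x => f (x, 1)).
Proof.
by move=> HW x y Hx Hy; rewrite -hf ?HW // -[(x, 1) * (y, 1)]/(x * y, 1 * 1) mulg1.
Qed.

Lemma hom_on_diag (H : {set gT}) :
  {in H, forall x, (x, x) \in W} -> is_hom_on H (fun x => f (x, x)).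
Proof. by move=> HW x y Hx Hy; rewrite -hf ?HW. Qed.

End PairHoms.

Definition congr_pairs (gT : finGroupType) (G N : {set gT}) : {set gT * gT} :=
  [set xy in setX G G | xy.1 * xy.2^-1 \in N].

Section CongruencePairs.
Variables (gT : finGroupType) (G N : {group gT}).
Hypothesis nsNG : N <| G.
Local Notation W := (congr_pairs G N).

Lemma mem_congr_pairs x y : ((x, y) \in W) = [&& x \in G, y \in G & x * y^-1 \in N].
Proof. by rewrite inE in_setX andbA. Qed.

Lemma congr_pairs_diag g : g \in G -> (g, g) \in W.
Proof. by move=> Gg; rewrite mem_congr_pairs Gg mulgV group1. Qed.

Lemma congr_pairs_inl n : n \in N -> (n, 1) \in W.
Proof.
by move=> Nn; rewrite mem_congr_pairs invg1 mulg1 Nn group1 (subsetP (normal_sub nsNG)).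
Qed.

Lemma congr_pairs_inr n : n \in N -> (1, n) \in W.
Proof.
by move=> Nn; rewrite mem_congr_pairs mul1g !groupV Nn group1 (subsetP (normal_sub nsNG)).
Qed.

Lemma pair_factor (x y : gT) : (x, y) = (x * y^-1, 1) * (y, y).
Proof. by rewrite -[RHS]/(x * y^-1 * y, 1 * y) mulgKV mul1g. Qed.

Fact congr_pairs_group_set : group_set W.
Proof.
apply/group_setP; split=> [|[x1 y1] [x2 y2]]; first exact: congr_pairs_diag.
rewrite !mem_congr_pairs => /and3P[Gx1 Gy1 N1] /and3P[Gx2 Gy2 N2].
rewrite /= (groupM Gx1 Gx2) (groupM Gy1 Gy2) mulg_invMJ groupM //.
by rewrite memJ_norm // (subsetP (normal_norm nsNG)) ?groupV.
Qed.

Lemma p1_congr_pairs : p1 W = G.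
Proof.
apply/setP => g; apply/imsetP/idP => [[[x y]] | Gg].
  by rewrite mem_congr_pairs => /and3P[Gx _ _] ->.
by exists (g, g); rewrite ?congr_pairs_diag.
Qed.

Lemma p2_congr_pairs : p2 W = G.
Proof.
apply/setP => g; apply/imsetP/idP => [[[x y]] | Gg].
  by rewrite mem_congr_pairs => /and3P[_ Gy _] ->.
by exists (g, g); rewrite ?congr_pairs_diag.
Qed.

Lemma k1_congr_pairs : k1 W = N.
Proof.
apply/setP => n; rewrite inE; apply/idP/idP => [|/congr_pairs_inl //].
by rewrite mem_congr_pairs invg1 mulg1 => /and3P[].
Qed.

Lemma k2_congr_pairs : k2 W = N.
Proof.
apply/setP => n; rewrite inE; apply/idP/idP => [|/congr_pairs_inr //].
by rewrite mem_congr_pairs mul1g groupV => /and3P[].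
Qed.

Lemma hom_on_congr_pairs (A : zmodType) (psi : gT -> A) :
    is_hom_on N psi -> {in [~: N, G], forall x, psi x = 0%R} ->
  is_hom_on W (fun xy => psi (xy.1 * xy.2^-1)).
Proof.
move=> hpsi psiR; have [sNG nNG] := andP nsNG.
have sRN : [~: N, G] \subset N by rewrite commg_subl.
have psiJ m g : m \in N -> g \in G -> psi (m ^ g) = psi m.
  move=> Nm Gg; have Rmg : [~ m, g] \in [~: N, G] by rewrite mem_commg.
  rewrite conjg_mulR hpsi // ?(psiR _ Rmg) ?addr0 //.
  exact: subsetP sRN _ Rmg.
move=> [x1 y1] [x2 y2]; rewrite !mem_congr_pairs => /and3P[_ Gy1 N1] /and3P[_ _ N2] /=.
by rewrite mulg_invMJ hpsi ?psiJ ?groupV // memJ_norm // (subsetP nNG) ?groupV.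
Qed.

Lemma congr_pairs_A_extensible (A : zmodType) :
  torsion_divisible A -> N :&: G^`(1) \subset [~: N, G] -> A_extensible A G W.
Proof.
move=> divA sNG'R f hf; have [sNG nNG] := andP nsNG.
have sRN : [~: N, G] \subset N by rewrite commg_subl.
have hfW : is_hom_on (Group congr_pairs_group_set) f := hf.
pose psi n := f (n, 1); pose phi g := f (g, g).
have hpsi : is_hom_on N psi := hom_on_inl hf congr_pairs_inl.
have hphi : is_hom_on G phi := hom_on_diag hf congr_pairs_diag.
have psiR : {in [~: N, G], forall x, psi x = 0%R}.
  apply: (hom_on_gen_eq0 hpsi).
    by apply/subsetP => _ /imset2P[n g Nn Gg ->]; rewrite (subsetP sRN) ?mem_commg.
  move=> _ /imset2P[n g Nn Gg ->]; rewrite /psi -(comm1g g).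
  exact: (hom_onR hfW (congr_pairs_inl Nn) (congr_pairs_diag Gg)).
have [al hal alN] := hom_on_ext divA sNG hpsi (fun x Hx => psiR x (subsetP sNG'R x Hx)).
exists (fun xy => al xy.1 - al xy.2 + phi xy.2)%R; split.
  move=> [x1 y1] [x2 y2]; rewrite !in_setX => /andP[Gx1 Gy1] /andP[Gx2 Gy2] /=.
  by rewrite !hal // hphi // opprD (addrACA (al x1)) [RHS]addrACA.
move=> [x y]; rewrite mem_congr_pairs => /and3P[Gx Gy Nxy] /=.
have -> : al x = (al (x * y^-1)%g + al y)%R by rewrite -hal ?groupM ?groupV ?mulgKV.
rewrite addrK alN // [in RHS]pair_factor.
by rewrite hf ?congr_pairs_inl ?congr_pairs_diag.
Qed.

Lemma congr_pairs_algCx_extensible :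
  A_extensible algCx G W -> N :&: G^`(1) \subset [~: N, G].
Proof.
move=> extW; have [sNG nNG] := andP nsNG.
apply/subsetP => n /setIP[Nn G'n]; apply: contraT => notRn.
have nsRN : [~: N, G] <| N by rewrite /normal commg_subl nNG commg_norml.
have cQQ : abelian (N / [~: N, G]) by rewrite sub_der1_abelian // derg1 commgS.
have [psi [hpsi psiR psin]] := hom_on_algCx_separates nsRN cQQ Nn notRn.
have [F [hF FW]] := extW _ (hom_on_congr_pairs hpsi psiR).
have GG_inl x : x \in G -> (x, 1) \in setX G G by move=> Gx; rewrite in_setX Gx group1.
have := hom_on_der1_eq0 (hom_on_inl hF GG_inl) G'n.
by rewrite /= FW ?congr_pairs_inl //= invg1 mulg1 => psin0; rewrite psin0 eqxx in psin.
Qed.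

Lemma extensible_congr_pairs : extensible G W <-> N :&: G^`(1) = [~: N, G].
Proof.
have [sNG nNG] := andP nsNG.
have sRNG' : [~: N, G] \subset N :&: G^`(1) by rewrite subsetI commg_subl nNG derg1 commSg.
split=> [[_ [_ extW]] | defR].
  apply/eqP; rewrite eqEsubset sRNG' andbT.
  exact: congr_pairs_algCx_extensible (extW _ Hypothesis_algCx).
split; [exact: p1_congr_pairs | split; [exact: p2_congr_pairs |]].
move=> A [pi [hpi _]]; apply: congr_pairs_A_extensible (hyp_pi_torsion_divisible hpi) _.
by rewrite defR.
Qed.

End CongruencePairs.

Lemma starp_congr_pairs (gT : finGroupType) (G N M : {group gT}) :
    N <| G -> M <| G ->
  starp (congr_pairs G N) (congr_pairs G M) = congr_pairs G (N <*> M).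
Proof.
move=> nsNG nsMG; have [sNG nNG] := andP nsNG.
have nNM : M \subset 'N(N) := subset_trans (normal_sub nsMG) nNG.
apply/setP => -[x y].
rewrite inE in_setX !p1_congr_pairs !p2_congr_pairs setIid mem_congr_pairs.
rewrite -[gval (joing_group _ _)]/(N <*> M) norm_joinEr //=.
apply/andP/and3P=> [[/andP[Gx Gy] /exists_inP[z Gz]] | [Gx Gy]].
  rewrite !mem_congr_pairs => /andP[/and3P[_ _ Nxz] /and3P[_ _ Mzy]].
  by split=> //; rewrite -(mulgKV z x) -mulgA mem_mulg.
case/mulsgP=> n m Nn Mm def_xy; rewrite Gx Gy; split=> //.
have Gn := subsetP sNG n Nn; apply/exists_inP; exists (n^-1 * x); rewrite ?groupM ?groupV //.
rewrite !mem_congr_pairs invMg invgK mulgA mulgV mul1g -mulgA def_xy mulKg.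
by rewrite Nn Mm Gx Gy groupM ?groupV.
Qed.

Fact k1_group_set (gT : finGroupType) (U : {group gT * gT}) : group_set (k1 U).
Proof.
apply/group_setP; split=> [|x y]; rewrite !inE ?group1 // => Ux Uy.
have -> : (x * y, 1) = (x, 1) * (y, 1) :> gT * gT by rewrite -[RHS]/(x * y, 1 * 1) mulg1.
exact: groupM.
Qed.
Canonical k1_group (gT : finGroupType) (U : {group gT * gT}) := Group (k1_group_set U).

Lemma diag_sub_congr_pairs (gT : finGroupType) (G : {group gT}) (U : {group gT * gT}) :
    U \subset setX G G -> diagG G \subset U ->
  exists2 N : {group gT}, N <| G & U :=: congr_pairs G N.
Proof.
move=> sUGG sGU; have UGG g : g \in G -> (g, g) \in U.
  by move=> Gg; apply: (subsetP sGU); apply: imset_f.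
have defU : U :=: congr_pairs G (k1 U).
  apply/setP => -[x y]; rewrite mem_congr_pairs inE; apply/idP/and3P => [Uxy | [Gx Gy]].
    have := subsetP sUGG _ Uxy; rewrite in_setX => /andP[Gx Gy]; split=> //.
    have -> : (x * y^-1, 1) = (x, y) * (y, y)^-1 :> gT * gT.
      by rewrite -[RHS]/(x * y^-1, y * y^-1) mulgV.
    by rewrite groupM ?groupV ?UGG.
  by rewrite (pair_factor x y) => Uxy1; rewrite groupM ?UGG.
exists (k1_group U); last exact: defU.
apply/andP; split.
  by apply/subsetP => n; rewrite inE => /(subsetP sUGG); rewrite in_setX => /andP[].
apply/subsetP => g Gg; rewrite inE; apply/subsetP => _ /imsetP[n Un ->].
rewrite inE.
have -> : (n ^ g, 1) = (n, 1) ^ (g, g) :> gT * gT by rewrite -[RHS]/(n ^ g, 1 ^ g) conj1g.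
by rewrite groupJ ?UGG //; rewrite inE in Un.
Qed.

Lemma commg_joing_normal (gT : finGroupType) (G N M : {group gT}) :
  N <| G -> M <| G -> [~: N <*> M, G] = [~: N, G] * [~: M, G].
Proof.
move=> /andP[_ nNG] /andP[sMG _]; rewrite norm_joinEr ?(subset_trans sMG) //.
by rewrite commMG // normsR ?(subset_trans sMG) ?normG.
Qed.

Theorem theorem5p6 (gT : finGroupType) (G : {group gT})
    (U V : {group (gT * gT)}) :
  U \subset setX G G -> V \subset setX G G ->
  diagG G \subset U -> diagG G \subset V ->
  extensible G U -> extensible G V ->
  (extensible G (starp U V) <->
     (k1 (starp U V) :&: G^`(1) = (k1 U :&: G^`(1)) * (k1 V :&: G^`(1)) /\
      k2 (starp U V) :&: G^`(1) = (k2 U :&: G^`(1)) * (k2 V :&: G^`(1)))).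
Proof.
move=> sUGG sVGG sGU sGV.
have [N nsNG ->] := diag_sub_congr_pairs sUGG sGU.
have [M nsMG ->] := diag_sub_congr_pairs sVGG sGV.
have nsNMG : N <*> M <| G by rewrite normalY.
move=> /(extensible_congr_pairs nsNG) defRN /(extensible_congr_pairs nsMG) defRM.
rewrite starp_congr_pairs // !k1_congr_pairs ?k2_congr_pairs //.
rewrite defRN defRM -commg_joing_normal //.
by apply: iff_trans (extensible_congr_pairs nsNMG) _; split=> [-> | [->]].
Qed.
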